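(* Let $X,Y$ be Banach spaces, let $F:X\rightrightarrows Y$ be a closed convex set-valued mapping, let $A\subset X$ be a closed convex set, let $\bar y\in Y$, put $S:=F^{-1}(\bar y)\cap A$, and let $\bar x\in S$. Then $$\frac{1}{\eta_A(F,\bar x,\bar y)}=\inf\{\tau>0:\exists\delta>0\text{ such that } N(S,x)\cap B_{X^*}\subset\tau\big(D^*F(x,\bar y)(B_{Y^*})+N(A,x)\cap B_{X^*}\big)\text{ for every }x\in S\cap B(\bar x,\delta)\}.$$
   Context: $B_X,B_Y,B_{X^*},B_{Y^*}$ are the closed unit balls of $X,Y$ and their duals; $B(x,\delta)$ is the open ball. $F$ closed convex means ${\rm gph}(F)=\{(x,y):y\in F(x)\}$ is closed and convex in $X\times Y$. For a closed convex set $C$ and $a\in C$: the contingent cone $T(C,a)$ is the set of $v$ for which there exist $v_n\to v$, $t_n\to0^+$ with $a+t_nv_n\in C$ for all $n$; the normal cone is $N(C,a):=\{x^*\in X^*:\langle x^*,x-a\rangle\le0\ \forall x\in C\}$. For $(x,y)\in{\rm gph}(F)$: $DF^{-1}(y,x)(v):=\{u\in X:(u,v)\in T({\rm gph}(F),(x,y))\}$, $DF^{-1}(y,x)(W)=\bigcup_{v\in W}DF^{-1}(y,x)(v)$ for $W\subset Y$; the coderivative is $D^*F(x,y)(y^* ):=\{x^*\in X^*:(x^*,-y^* )\in N({\rm gph}(F),(x,y))\}$ and $D^*F(x,y)(B_{Y^*})=\bigcup_{y^*\in B_{Y^*}}D^*F(x,y)(y^* )$. $\eta_A(F,\bar x,\bar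 y):=\sup\{\eta>0:\exists\delta>0$ such that for every $x\in S\cap B(\bar x,\delta)$: $DF^{-1}(\bar y,x)(\eta_1B_Y)\cap(T(A,x)+\eta_2B_X)\subset T(S,x)+B_X$ for all $\eta_1,\eta_2\ge0$ with $\eta_1+\eta_2<\eta\}$, with $\sup\emptyset=0$, $\inf\emptyset=+\infty$, $1/0=+\infty$. *)

From HB Require Import structures.
From mathcomp Require Import all_boot all_order all_algebra.
From mathcomp Require Import all_classical all_reals all_analysis.
Set Implicit Arguments. Unset Strict Implicit. Unset Printing Implicit Defensive.
Import Order.TTheory GRing.Theory Num.Theory.
Import numFieldNormedType.Exports.
Local Open Scope classical_set_scope.
Local Open Scope ring_scope.

Section VarAnal.
Variable R : realType.

Definition convexS (V : lmodType R) (C : set V) :=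
  forall x y (t : R), C x -> C y -> 0 <= t -> t <= 1 -> C (t *: x + (1 - t) *: y).

Definition cball1 (X : normedModType R) : set X := [set x | `|x| <= 1].

Definition oball (X : normedModType R) (a : X) (d : R) : set X :=
  [set x | `|x - a| < d].

Definition scaleS (X : lmodType R) (r : R) (C : set X) : set X :=
  [set r *: c | c in C].
Definition msum (X : lmodType R) (C D : set X) : set X :=
  [set c + d | c in C & d in D].

Definition is_dual (X : normedModType R) (f : X -> R) :=
  linear f /\ continuous f.

Definition dball1 (X : normedModType R) : set (X -> R) :=
  [set f | is_dual f /\ forall x, `|f x| <= `|x|].

Definition tcone (X : normedModType R) (C : set X) (a : X) : set X :=
  [set v | exists (vn : nat -> X) (tn : nat -> R),
     vn @ \oo --> v /\ tn @ \oo --> 0 /\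
     (forall n, 0 < tn n) /\ (forall n, C (a + tn n *: vn n))].

Definition ncone (X : normedModType R) (C : set X) (a : X) : set (X -> R) :=
  [set f | is_dual f /\ forall x, C x -> f (x - a) <= 0].

Definition gph (X Y : Type) (F : X -> set Y) : set (X * Y) :=
  [set p | F p.1 p.2].

Definition closed_convex_map (X Y : normedModType R) (F : X -> set Y) :=
  closed (gph F) /\
  (forall x1 y1 x2 y2 (t : R), F x1 y1 -> F x2 y2 -> 0 <= t -> t <= 1 ->
     F (t *: x1 + (1 - t) *: x2) (t *: y1 + (1 - t) *: y2)).

Definition DFinv (X Y : normedModType R) (F : X -> set Y) (y : Y) (x : X)
  (v : Y) : set X :=
  [set u | tcone (gph F : set (X * Y)%type) (x, y) (u, v)].

Definition DFinvS (X Y : normedModType R) (F : X -> set Y) (y : Y) (x : X)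
  (W : set Y) : set X :=
  [set u | exists2 v, W v & DFinv F y x v u].

(* coderivative: x^* in D^*F(x,y)(y^* ) iff (x^*, -y^* ) in N(gph F,(x,y)),
   with the dual of X x Y identified with pairs (x^* , z^* ), pairing x^* u + z^* v *)
Definition coderiv (X Y : normedModType R) (F : X -> set Y) (x : X) (y : Y)
  (ys : Y -> R) : set (X -> R) :=
  [set xs | is_dual xs /\ is_dual ys /\
     forall u v, F u v -> xs (u - x) + (- ys (v - y)) <= 0].

Definition coderivB (X Y : normedModType R) (F : X -> set Y) (x : X) (y : Y)
  : set (X -> R) :=
  [set xs | exists2 ys, dball1 ys & coderiv F x y ys xs].

Definition eta_set (X Y : normedModType R) (F : X -> set Y) (A : set X)
  (xb : X) (yb : Y) : set R :=
  let S := [set x | F x yb /\ A x] in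
  [set eta | 0 < eta /\ exists2 delta, 0 < delta &
     forall x, S x -> oball xb delta x ->
     forall eta1 eta2, 0 <= eta1 -> 0 <= eta2 -> eta1 + eta2 < eta ->
       (DFinvS F yb x (scaleS eta1 (@cball1 Y)) `&`
        msum (tcone A x) (scaleS eta2 (@cball1 X)))
       `<=` msum (tcone S x) (@cball1 X)].

(* eta_A(F,xbar,ybar) with the convention sup emptyset = 0
   (all elements are > 0, so adjoining 0 realizes exactly this convention) *)
Definition etaA (X Y : normedModType R) (F : X -> set Y) (A : set X)
  (xb : X) (yb : Y) : \bar R :=
  ereal_sup ((fun e : R => e%:E) @` eta_set F A xb yb `|` [set 0%E]).

Definition tau_set (X Y : normedModType R) (F : X -> set Y) (A : set X)
  (xb : X) (yb : Y) : set R :=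
  let S := [set x | F x yb /\ A x] in
  [set tau | 0 < tau /\ exists2 delta, 0 < delta &
     forall x, S x -> oball xb delta x ->
     forall xs, ncone S x xs -> dball1 xs ->
       exists us ws, coderivB F x yb us /\ ncone A x ws /\ dball1 ws /\
         xs = (fun z => tau * (us z + ws z))].

End VarAnal.

From Pilot Require Import Defs.
From HB Require Import structures.
From mathcomp Require Import all_boot all_order all_algebra.
From mathcomp Require Import all_classical all_reals all_analysis.
From mathcomp Require Import lra ring.
Set Implicit Arguments. Unset Strict Implicit. Unset Printing Implicit Defensive.
Import Order.TTheory GRing.Theory Num.Theory.
Import numFieldNormedType.Exports.
Local Open Scope classical_set_scope.
Local Open Scope ring_scope.

(* Both inequalities are convex separation arguments resting on Hahn-Banach.
   Suppose every x* in N(S,x) of norm <= 1 is tau times u* + w*, with u* a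
   coderivative of F at (x,ybar) and w* in N(A,x) of norm <= 1.  Then 1/tau is
   admissible for eta: a direction u outside T(S,x) + B_X is separated by such
   an x* with x*(u) >= 1, whereas u in DF^{-1}(eta1 B_Y) and in T(A,x) + eta2 B_X
   forces x*(u) <= tau (eta1 + eta2) < 1.  Conversely, if eta is admissible and
   tau eta > 1, then x*/tau is dominated on the product of the cones generated
   by gph F - (x,ybar) and A - x by (u,v,a) |-> |u - a| + |v|, and a Hahn-Banach
   extension dominated by the sum norm of X x Y splits into the two pieces. *)

Section LinearMap.
Variables (R : ringType) (U V : lmodType R) (f : U -> V).
Hypothesis f_lin : linear f.

Lemma linD u v : f (u + v) = f u + f v.
Proof. by have := f_lin 1 u v; rewrite !scale1r. Qed.

Lemma lin0 : f 0 = 0.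
Proof. by apply: (@addrI _ (f 0)); rewrite -linD !addr0. Qed.

Lemma linZ a u : f (a *: u) = a *: f u.
Proof. by have := f_lin a u 0; rewrite !addr0 lin0 addr0. Qed.

Lemma linN u : f (- u) = - f u.
Proof. by rewrite -scaleN1r linZ scaleN1r. Qed.

Lemma linB u v : f (u - v) = f u - f v.
Proof. by rewrite linD linN. Qed.

End LinearMap.

Lemma linZr (R : numFieldType) (V : lmodType R) (f : V -> R) a u :
  linear f -> f (a *: u) = a * f u.
Proof. by move=> f_lin; rewrite (linZ f_lin). Qed.

(** * Sublinear functionals and Hahn-Banach *)

Definition sublinear (R : numDomainType) (V : lmodType R) (p : V -> R) :=
  (forall x y, p (x + y) <= p x + p y) /\
  (forall (t : R) x, 0 <= t -> p (t *: x) = t * p x).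

Lemma sublinear0 (R : numDomainType) (V : lmodType R) (p : V -> R) :
  sublinear p -> p 0 = 0.
Proof. by case=> _ pZ; rewrite -(scale0r 0) pZ // mul0r. Qed.

Lemma sublinear_norm (R : numDomainType) (V : normedModType R) :
  sublinear (fun x : V => `|x|).
Proof. by split=> [|t x t0]; [exact: ler_normD | rewrite normrZ ger0_norm]. Qed.

Lemma sublinear_pair (R : numDomainType) (V W : lmodType R) (p : V -> R)
    (q : W -> R) :
  sublinear p -> sublinear q -> sublinear (fun z : V * W => p z.1 + q z.2).
Proof.
move=> [pD pZ] [qD qZ]; split=> [[x1 y1] [x2 y2]|t [x y] t0] /=.
  by rewrite addrACA lerD.
by rewrite pZ // qZ // mulrDr.
Qed.

Definition convex_cone (R : numDomainType) (V : lmodType R) (C : set V) :=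
  [/\ C 0, forall u v, C u -> C v -> C (u + v) &
      forall (t : R) u, 0 < t -> C u -> C (t *: u)].

Lemma convex_cone_ge0 (R : numFieldType) : convex_cone [set t : R | 0 <= t].
Proof.
by split=> [|u v|t u t0] /=; [exact: lexx | exact: addr_ge0 | exact: mulr_ge0 (ltW t0)].
Qed.

Lemma convex_coneX (R : numDomainType) (V W : lmodType R) (C : set V) (D : set W) :
  convex_cone C -> convex_cone D -> convex_cone [set z : V * W | C z.1 /\ D z.2].
Proof.
move=> [C0 CD CZ] [D0 DD DZ]; split=> [//|u v [Cu Du] [Cv Dv]|t u t0 [Cu Du]].
  by split; [exact: CD | exact: DD].
by split; [exact: CZ | exact: DZ].
Qed.

Lemma linear_norm_le (R : realDomainType) (V : lmodType R) (L N : V -> R) :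
  (forall x, L (- x) = - L x) -> (forall x, N (- x) = N x) ->
  (forall x, L x <= N x) -> forall x, `|L x| <= N x.
Proof. by move=> LN NN L_le x; rewrite ler_norml L_le andbT -NN lerNl -LN. Qed.

Section HahnBanach.
Variables (R : realType) (V : lmodType R) (p : V -> R).
Hypothesis p_sub : sublinear p.

Let pD := p_sub.1.
Let pZ := p_sub.2.

Definition dominated_linear_graph (G : set (V * R)) :=
  [/\ forall x a b, G (x, a) -> G (x, b) -> a = b,
      forall x a y b, G (x, a) -> G (y, b) -> G (x + y, a + b),
      forall t x a, G (x, a) -> G (t *: x, t * a) &
      forall x a, G (x, a) -> a <= p x].

Definition graph_extension (G : set (V * R)) (x0 : V) (c : R) : set (V * R) :=
  [set z | exists m a (t : R), G (m, a) /\ z = (m + t *: x0, a + t * c)].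

Lemma dominated_linear_graph_setU0 G :
  dominated_linear_graph G -> dominated_linear_graph (G `|` [set (0, 0)]).
Proof.
case=> Gf GD GZ Gp.
have G0 a : G (0, a) -> a = 0.
  by move=> Ga; apply: (Gf _ _ _ Ga); have := GZ 0 _ _ Ga; rewrite scale0r mul0r.
have U0 x a : [set ((0 : V), (0 : R))] (x, a) -> x = 0 /\ a = 0 by case.
split.
- move=> x a b [Ga|/U0[-> ->]] [Gb|/U0[Ex ->]] //; first exact: Gf Ga Gb.
    by move: Ga; rewrite Ex => /G0.
  exact/esym/G0.
- move=> x a y b [Ga|/U0[-> ->]] [Gb|/U0[-> ->]]; rewrite ?addr0 ?add0r;
    by [left; exact: GD | left | left | right].
- by move=> t x a [Ga|/U0[-> ->]]; [left; exact: GZ | right; rewrite scaler0 mulr0].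
- by move=> x a [Ga|/U0[-> ->]]; [exact: Gp | rewrite (sublinear0 p_sub)].
Qed.

Lemma dominated_linear_graph_gap G x0 : dominated_linear_graph G -> G (0, 0) ->
  exists c, (forall m a, G (m, a) -> a - p (m - x0) <= c) /\
            (forall m a, G (m, a) -> c <= p (m + x0) - a).
Proof.
move=> [_ GD _ Gp] G00.
pose E := [set z.2 - p (z.1 - x0) | z in G].
have ubE m1 a1 : G (m1, a1) -> ubound E (p (m1 + x0) - a1).
  move=> G1 _ [[m2 a2] G2 <-] /=.
  have := pD (m2 - x0) (m1 + x0); rewrite addrCA subrK.
  by have := Gp _ _ (GD _ _ _ _ G1 G2); lra.
have hsE : has_sup E.
  by split; [exists (0 - p (0 - x0)), (0, 0) | exists (p (0 + x0) - 0); exact: ubE].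
exists (sup E); split=> [m a Gma|m a Gma]; last by apply: ge_sup; [case: hsE|exact: ubE].
by apply: sup_upper_bound => //; exists (m, a).
Qed.

Lemma dominated_linear_graph_extension G x0 c :
  dominated_linear_graph G -> (forall a, ~ G (x0, a)) ->
  (forall m a, G (m, a) -> a - p (m - x0) <= c) ->
  (forall m a, G (m, a) -> c <= p (m + x0) - a) ->
  dominated_linear_graph (graph_extension G x0 c).
Proof.
move=> [Gf GD GZ Gp] Gx0 c_ge c_le; split.
- move=> x a b [m [a1 [t [G1 [-> ->]]]]] [m' [a' [t' [G2 []]]]].
  have [<- /addIr Em ->|tt' Ex _] := eqVneq t t'.
    by subst m'; rewrite (Gf _ _ _ G1 G2).
  (* Two representations with t != t' would put x0 in the domain of G. *)
  have x0E : x0 = (t - t')^-1 *: (m' + (-1) *: m).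
    apply: (@scalerI _ _ (t - t')); first by rewrite subr_eq0.
    rewrite scalerA divff ?subr_eq0 // scale1r scaleN1r scalerBl.
    by apply/eqP; rewrite subr_eq addrAC -Ex addrAC subrr add0r.
  case: (Gx0 ((t - t')^-1 * (a' + (-1) * a1))); rewrite x0E.
  by apply: (GZ); apply: (GD _ _ _ _ G2); exact: GZ.
- move=> x a y b [m [a1 [t [G1 [-> ->]]]]] [m' [a' [t' [G2 [-> ->]]]]].
  exists (m + m'), (a1 + a'), (t + t'); split; first exact: GD G1 G2.
  by congr pair; rewrite (scalerDl, mulrDl) addrACA.
- move=> s x a [m [a1 [t [G1 [-> ->]]]]].
  exists (s *: m), (s * a1), (s * t); split; first exact: GZ G1.
  by rewrite scalerDr mulrDr scalerA mulrA.
- move=> x a [m [a1 [t [G1 [-> ->]]]]].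
  have [t_lt0|t_gt0|->] := ltgtP t 0; last by rewrite scale0r mul0r !addr0; exact: Gp.
  + have nt_gt0 : 0 < - t by rewrite oppr_gt0.
    have := ler_wpM2l (ltW nt_gt0) (c_ge _ _ (GZ (- t)^-1 _ _ G1)).
    rewrite mulrBr mulrA divff ?gt_eqF // mul1r -(pZ _ (ltW nt_gt0)) scalerBr.
    by rewrite scalerA divff ?gt_eqF // scale1r scaleNr opprK mulNr; lra.
  + have := ler_wpM2l (ltW t_gt0) (c_le _ _ (GZ t^-1 _ _ G1)).
    rewrite mulrBr mulrA divff ?gt_eqF // mul1r -(pZ _ (ltW t_gt0)) scalerDr.
    by rewrite scalerA divff ?gt_eqF // scale1r; lra.
Qed.

Theorem hahn_banach : exists L : V -> R, linear L /\ forall x, L x <= p x.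
Proof.
have [A [gA Amax]] : exists A, dominated_linear_graph A /\
    forall B, A `<` B -> ~ dominated_linear_graph B.
  apply: Zorn_bigcup => F FP Ftot; split.
  - move=> x a b [X FX Xa] [Y FY Yb].
    have [XY|YX] := Ftot _ _ FX FY.
      by case: (FP _ FY) => Yf _ _ _; apply: Yf (XY _ Xa) Yb.
    by case: (FP _ FX) => Xf _ _ _; apply: Xf Xa (YX _ Yb).
  - move=> x a y b [X FX Xa] [Y FY Yb].
    have [XY|YX] := Ftot _ _ FX FY.
      by exists Y => //; case: (FP _ FY) => _ YD _ _; apply: YD (XY _ Xa) Yb.
    by exists X => //; case: (FP _ FX) => _ XD _ _; apply: XD Xa (YX _ Yb).
  - by move=> t x a [X FX Xa]; exists X => //; case: (FP _ FX) => _ _ XZ _; exact: XZ.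
  - by move=> x a [X FX Xa]; case: (FP _ FX) => _ _ _ Xp; exact: Xp.
pose A' := A `|` [set (0, 0)].
have gA' := dominated_linear_graph_setU0 gA.
have A'_total x : exists a, A' (x, a).
  apply: contrapT => /forallNP nx.
  have [c [c_ge c_le]] := dominated_linear_graph_gap x gA' (or_intror erefl).
  have gB := dominated_linear_graph_extension gA' nx c_ge c_le.
  apply: (Amax _ _ gB); split=> [z Az|BA].
    exists z.1, z.2, 0; split; first by left; case: z Az.
    by rewrite scale0r mul0r !addr0 -surjective_pairing.
  apply: (nx c); left; apply: BA.
  by exists 0, 0, 1; split; [right | rewrite scale1r mul1r !add0r].
pose L x := projT1 (cid (A'_total x)).
have LP x : A' (x, L x) by exact: projT2 (cid (A'_total x)).
case: gA' => Af AD AZ Ap.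
exists L; split=> [t u v|x]; last exact: Ap _ _ (LP x).
by apply: (Af (t *: u + v)); [exact: LP | apply: AD; [apply: AZ|]; exact: LP].
Qed.

End HahnBanach.

Section HahnBanachCone.
Variables (R : realType) (V W : lmodType R) (N : V -> R) (C : set W).
Variables (g : W -> V) (psi : W -> R).
Hypotheses (N_sub : sublinear N) (C_cone : convex_cone C).
Hypotheses (g_lin : linear g) (psi_lin : linear psi).
Hypothesis psi_le : forall w, C w -> psi w <= N (g w).

Let ND := N_sub.1.
Let NZ := N_sub.2.
Let C0 : C 0. Proof. by case: C_cone. Qed.
Let CD u v : C u -> C v -> C (u + v). Proof. by case: C_cone => _ + _; apply. Qed.
Let CZ t u : 0 < t -> C u -> C (t *: u). Proof. by case: C_cone => _ _; apply. Qed.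

(* [hahn_banach] is applied to q, which is sublinear, lies below N (take w = 0)
   and satisfies q (- g w) <= - psi w on C. *)
Let E x := [set N (x + g w) - psi w | w in C].
Let q x := inf (E x).

Let E_lb x : lbound (E x) (- N (- x)).
Proof.
move=> _ [w Cw <-]; have := ND (x + g w) (- x).
by rewrite addrC addKr; have := psi_le Cw; lra.
Qed.

Let E_neq0 x : E x !=set0.
Proof. by exists (N (x + g 0) - psi 0), 0. Qed.

Let q_le x w : C w -> q x <= N (x + g w) - psi w.
Proof. by move=> Cw; apply: ge_inf; [exists (- N (- x)); exact: E_lb | exists w]. Qed.

Let q_ge x a : (forall w, C w -> a <= N (x + g w) - psi w) -> a <= q x.
Proof. by move=> H; apply: lb_le_inf => // _ [w Cw <-]; exact: H. Qed.

Let qD x y : q (x + y) <= q x + q y.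
Proof.
suff : q (x + y) - q x <= q y by lra.
apply: q_ge => w2 C2; suff : q (x + y) - (N (y + g w2) - psi w2) <= q x by lra.
apply: q_ge => w1 C1.
have := q_le (x + y) (CD C1 C2); have := ND (x + g w1) (y + g w2).
by rewrite (linD g_lin) (linD psi_lin) addrACA; lra.
Qed.

Let q_gt0Z t x : 0 < t -> q (t *: x) <= t * q x.
Proof.
move=> t0; rewrite -ler_pdivrMl //; apply: q_ge => w Cw; rewrite ler_pdivrMl //.
have := q_le (t *: x) (CZ t0 Cw).
by rewrite (linZ g_lin) -scalerDr (NZ _ (ltW t0)) (linZr _ _ psi_lin) -mulrBr.
Qed.

Let q0 : q 0 = 0.
Proof.
apply/eqP; rewrite eq_le; apply/andP; split.
  have := q_le 0 C0.
  by rewrite (lin0 g_lin) (lin0 psi_lin) addr0 subr0 (sublinear0 N_sub).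
by have := lb_le_inf (@E_neq0 0) (@E_lb 0); rewrite oppr0 (sublinear0 N_sub) oppr0.
Qed.

Let q_sub : sublinear q.
Proof.
split=> // t x; rewrite le_eqVlt => /orP[/eqP <-|t0]; first by rewrite scale0r mul0r q0.
apply/eqP; rewrite eq_le q_gt0Z //=.
have ti : 0 < t^-1 by rewrite invr_gt0.
have := q_gt0Z (t *: x) ti; rewrite scalerA mulVf ?gt_eqF // scale1r.
by rewrite ler_pdivlMl // mulrC.
Qed.

Theorem hahn_banach_cone : exists L : V -> R, [/\ linear L,
  forall x, L x <= N x & forall w, C w -> psi w <= L (g w)].
Proof.
have [L [L_lin L_le]] := hahn_banach q_sub.
exists L; split=> // [x|w Cw].
  apply: le_trans (L_le x) _.
  by have := q_le x C0; rewrite (lin0 g_lin) (lin0 psi_lin) addr0 subr0.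
have := le_trans (L_le (- g w)) (q_le (- g w) Cw).
by rewrite addNr (sublinear0 N_sub) sub0r (linN L_lin); lra.
Qed.

End HahnBanachCone.

(** * Generated, tangent and normal cones *)

Section ConeGen.
Variables (R : realType) (V : lmodType R) (D : set V) (a : V).
Hypotheses (D_convex : convexS D) (Da : D a).

Definition cone_gen : set V :=
  [set c | exists (t : R) s, 0 <= t /\ D s /\ c = t *: (s - a)].

Lemma cone_gen_sub s : D s -> cone_gen (s - a).
Proof. by move=> Ds; exists 1, s; rewrite scale1r. Qed.

Lemma cone_genD c1 c2 : cone_gen c1 -> cone_gen c2 -> cone_gen (c1 + c2).
Proof.
move=> [t1 [s1 [t1_ge0 [D1 ->]]]] [t2 [s2 [t2_ge0 [D2 ->]]]].
have [t12_eq0|t12_gt0] := eqVneq (t1 + t2) 0.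
  have [-> ->] : t1 = 0 /\ t2 = 0 by split; lra.
  by exists 0, a; rewrite !scale0r addr0.
have t12_gt0' : 0 < t1 + t2 by rewrite lt_neqAle eq_sym t12_gt0 addr_ge0.
pose l := t1 / (t1 + t2).
have l_ge0 : 0 <= l by rewrite divr_ge0 // ltW.
have l_le1 : l <= 1 by rewrite ler_pdivrMr // mul1r lerDl.
exists (t1 + t2), (l *: s1 + (1 - l) *: s2); split; first exact: ltW.
split; first exact: D_convex.
have -> : 1 - l = t2 / (t1 + t2) by rewrite /l; field; rewrite gt_eqF.
rewrite /l [RHS]scalerBr [in RHS]scalerDr !scalerA !(mulrC (t1 + t2)).
by rewrite !divfK ?gt_eqF // !scalerBr scalerDl opprD addrACA.
Qed.

Lemma convex_cone_gen : convex_cone cone_gen.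
Proof.
split=> [|c1 c2|l c l_gt0 [t [s [t_ge0 [Ds ->]]]]].
- by exists 0, a; rewrite scale0r.
- exact: cone_genD.
- by exists (l * t), s; rewrite scalerA mulr_ge0 // ltW.
Qed.

End ConeGen.

Lemma cone_gen_tcone (R : realType) (V : normedModType R) (D : set V) a :
  convexS D -> D a -> cone_gen D a `<=` tcone D a.
Proof.
move=> D_convex Da _ [t [s [t_ge0 [Ds ->]]]].
(* For t_n := harmonic n / (t + 1), a + t_n t (s - a) lies on the segment [a, s]. *)
exists (fun=> t *: (s - a)), (fun n => (t + 1)^-1 * harmonic n).
split; first exact: cvg_cst.
split; first by rewrite -(mulr0 (t + 1)^-1); exact: cvgMl_tmp cvg_harmonic.
split=> [n|n]; first by rewrite mulr_gt0 ?invr_gt0 ?harmonic_gt0 //; lra.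
pose l := (t + 1)^-1 * harmonic n * t.
have l_ge0 : 0 <= l by rewrite !mulr_ge0 ?invr_ge0 ?harmonic_ge0 //; lra.
have l_le1 : l <= 1.
  have h_le1 : harmonic n <= 1 :> R by rewrite /= invf_le1 ?ler1n // ltr0n.
  rewrite /l mulrAC -mulrA (mulrC (t + 1)^-1); apply: le_trans h_le1.
  by rewrite ler_pdivrMr; [have := @harmonic_ge0 R n; nra | lra].
have := D_convex s a l Ds Da l_ge0 l_le1.
by rewrite scalerA -/l scalerBr scalerBl scale1r addrCA addrC.
Qed.

Section Duals.
Variable R : realType.

Lemma linear_bounded_continuous (X : normedModType R) (f : X -> R) (k : R) :
  0 <= k -> linear f -> (forall z, `|f z| <= k * `|z|) -> continuous f.
Proof.
move=> k_ge0 f_lin f_le x; apply/cvgrPdist_lt => e e_gt0.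
have ek_gt0 : 0 < e / (k + 1) by rewrite divr_gt0 //; lra.
near=> z; rewrite -(linB f_lin); apply: le_lt_trans (f_le _) _.
apply: (@le_lt_trans _ _ ((k + 1) * `|x - z|)); first by rewrite ler_wpM2r //; lra.
rewrite mulrC -ltr_pdivlMr; last lra.
by near: z; move: (@cvg_id _ (nbhs x)) => /cvgrPdist_lt /(_ _ ek_gt0).
Unshelve. all: by end_near.
Qed.

Lemma dball1_linear (X : normedModType R) (f : X -> R) :
  linear f -> (forall z, `|f z| <= `|z|) -> dball1 f.
Proof.
move=> f_lin f_le; split=> //; split=> //.
by apply: (linear_bounded_continuous ler01) => // z; rewrite mul1r.
Qed.

Lemma dball1_le (X : normedModType R) (f : X -> R) z : dball1 f -> f z <= `|z|.
Proof. by case=> _ f_le; exact: le_trans (ler_norm _) (f_le z). Qed.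

Lemma dball1_scaleS_le (X : normedModType R) (f : X -> R) e z :
  0 <= e -> dball1 f -> scaleS e (@cball1 _ X) z -> f z <= e.
Proof.
move=> e_ge0 f_B [b b_le1 <-]; rewrite (linZr _ _ f_B.1.1).
by rewrite -[leRHS]mulr1 ler_wpM2l // (le_trans (dball1_le _ f_B)).
Qed.

Lemma is_dual_lincomb (X : normedModType R) (f g : X -> R) (k : R) :
  is_dual f -> is_dual g -> is_dual (fun z => k * f z - g z).
Proof.
move=> [f_lin f_cont] [g_lin g_cont]; split=> [a u v|z].
  rewrite (linD f_lin) (linD g_lin) (linZr _ _ f_lin) (linZr _ _ g_lin).
  by rewrite /GRing.scale /=; ring.
by apply: cvgB; [apply: cvgMl_tmp; exact: f_cont | exact: g_cont].
Qed.

Lemma dball1_pair_split (X Y : normedModType R) (L : X * Y -> R) :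
  linear L -> (forall p, L p <= `|p.1| + `|p.2|) ->
  [/\ dball1 (fun z => L (z, 0)), dball1 (fun v => L (0, v)) &
      forall z v, L (z, v) = L (z, 0) + L (0, v)].
Proof.
move=> L_lin L_le.
have L_norm := linear_norm_le (linN L_lin) (fun p => congr2 +%R (normrN p.1) (normrN p.2)) L_le.
split=> [||z v].
- apply: dball1_linear=> [a u v|z]; last by have := L_norm (z, 0); rewrite normr0 addr0.
  rewrite -(linZ L_lin) -(linD L_lin); congr L.
  by apply/pair_equal_spec; rewrite /= scaler0 addr0.
- apply: dball1_linear=> [a u v|v]; last by have := L_norm (0, v); rewrite normr0 add0r.
  rewrite -(linZ L_lin) -(linD L_lin); congr L.
  by apply/pair_equal_spec; rewrite /= scaler0 addr0.
- by rewrite -(linD L_lin); congr L; apply/pair_equal_spec; rewrite /= addr0 add0r.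
Qed.

Lemma ncone_tcone_le0 (Z : normedModType R) (D : set Z) a f v :
  ncone D a f -> tcone D a v -> f v <= 0.
Proof.
move=> [[f_lin f_cont] f_le] [vn [tn [vn_v [_ [tn_gt0 Dn]]]]].
apply: (closed_cvg _ (@closed_le R 0) _ _ (continuous_cvg _ (f_cont v) vn_v)) => //.
near=> n => /=; have := f_le _ (Dn n).
by rewrite addrC addKr (linZr _ _ f_lin) pmulr_rle0.
Unshelve. all: by end_near.
Qed.

Lemma is_dual_pair (X Y : normedModType R) (f : X -> R) (g : Y -> R) :
  is_dual f -> is_dual g -> is_dual (fun p : X * Y => f p.1 - g p.2).
Proof.
move=> [f_lin f_cont] [g_lin g_cont]; split=> [a [u1 v1] [u2 v2]|p] /=.
  rewrite (linD f_lin) (linD g_lin) (linZr _ _ f_lin) (linZr _ _ g_lin).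
  by rewrite /GRing.scale /=; ring.
apply: cvgB.
  exact: cvg_comp (@cvg_fst _ _ (nbhs p.1) (nbhs p.2) _) (f_cont p.1).
exact: cvg_comp (@cvg_snd _ _ (nbhs p.1) (nbhs p.2) _) (g_cont p.2).
Qed.

Lemma coderiv_DFinv_le (X Y : normedModType R) (F : X -> set Y) x y ys us u v :
  coderiv F x y ys us -> DFinv F y x v u -> us u <= ys v.
Proof.
move=> [us_dual [ys_dual us_le]] Tuv.
suff : us u - ys v <= 0 by lra.
apply: (ncone_tcone_le0 (f := fun p : X * Y => us p.1 - ys p.2) _ Tuv).
by split=> [|[u' v'] /= Fuv]; [exact: is_dual_pair | exact: us_le].
Qed.

Lemma scaleS_norm (X : normedModType R) (z : X) (l : R) :
  scaleS (l * `|z|) (@cball1 _ X) (l *: z).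
Proof.
have [->|z_neq0] := eqVneq z 0; first by exists 0; rewrite /cball1 /= ?normr0 ?scaler0.
exists (`|z|^-1 *: z); first by rewrite /cball1 /= normrZ normfV normr_id mulVf ?normr_eq0.
by rewrite scalerA -mulrA mulfV ?normr_eq0 // mulr1.
Qed.

End Duals.

Lemma ncone_separation (R : realType) (Z : normedModType R) (D : set Z) a u :
  convexS D -> D a -> ~ Defs.msum (tcone D a) (@cball1 _ Z) u ->
  exists L, [/\ ncone D a L, dball1 L & 1 <= L u].
Proof.
move=> D_convex Da u_notin.
pose C := [set w : Z * R | cone_gen D a w.1 /\ 0 <= w.2].
have C_cone : convex_cone C :=
  convex_coneX (convex_cone_gen D_convex Da) (convex_cone_ge0 R).
have g_lin : linear (fun w : Z * R => w.2 *: u - w.1).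
  move=> k [c1 t1] [c2 t2] /=.
  by rewrite scalerDl -[k *: t1]/(k * t1) -scalerA scalerBr opprD addrACA.
have psi_lin : linear (fun w : Z * R => w.2) by [].
(* Were t > |t u - c| for c in cone (D - a), then t^-1 c would be a tangent
   direction within distance 1 of u. *)
have psi_le w : C w -> w.2 <= `|w.2 *: u - w.1|.
  case: w => c t [Cc t_ge0] /=; rewrite leNgt; apply/negP => t_gt.
  have t_gt0 : 0 < t by apply: le_lt_trans t_gt.
  apply: u_notin; exists (t^-1 *: c).
    apply: (cone_gen_tcone D_convex Da).
    by case: (convex_cone_gen D_convex Da) => _ _; apply; rewrite ?invr_gt0.
  exists (u - t^-1 *: c); last by rewrite addrC subrK.
  rewrite /cball1 /= -[u](scale1r) -(mulVf (lt0r_neq0 t_gt0)) -scalerA -scalerBr.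
  by rewrite normrZ gtr0_norm ?invr_gt0 // ler_wpM2l ?invr_ge0 ?(ltW t_gt0) ?(ltW t_gt).
have [L [L_lin L_le L_ge]] :=
  hahn_banach_cone (sublinear_norm Z) C_cone g_lin psi_lin psi_le.
have L_B : dball1 L.
  by apply: dball1_linear => //; exact: linear_norm_le (linN L_lin) (@normrN _ _) L_le.
exists L; split=> //.
  split=> [|s Ds]; first exact: L_B.1.
  have := L_ge (s - a, 0) (conj (cone_gen_sub a Ds) (lexx 0)).
  by rewrite /= scale0r sub0r (linN L_lin); lra.
have [cone0 _ _] := convex_cone_gen D_convex Da.
have := L_ge (0, 1) (conj cone0 ler01).
by rewrite /= scale1r subr0.
Qed.

(** * Tangent regularity versus normal decompositions *)

Section Regularity.
Variables (R : realType) (X Y : normedModType R).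
Variables (F : X -> set Y) (A : set X) (yb : Y).
Hypotheses (gph_convex : convexS (gph F : set (X * Y))) (A_convex : convexS A).

Let S := [set x | F x yb /\ A x].

Let S_convex : convexS S.
Proof.
move=> x1 x2 t [F1 A1] [F2 A2] t_ge0 t_le1; split; last exact: A_convex.
have := @gph_convex (x1, yb) (x2, yb) t F1 F2 t_ge0 t_le1.
by rewrite /gph /= -scalerDl addrCA subrr addr0 scale1r.
Qed.

Definition tangent_inclusion x (e1 e2 : R) :=
  DFinvS F yb x (scaleS e1 (@cball1 _ Y)) `&`
    Defs.msum (tcone A x) (scaleS e2 (@cball1 _ X))
  `<=` Defs.msum (tcone S x) (@cball1 _ X).

Definition tangent_regular x (eta : R) :=
  forall e1 e2, 0 <= e1 -> 0 <= e2 -> e1 + e2 < eta -> tangent_inclusion x e1 e2.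

Definition normal_decomposition x (tau : R) :=
  forall xs, ncone S x xs -> dball1 xs ->
    exists us ws, coderivB F x yb us /\ ncone A x ws /\ dball1 ws /\
      xs = (fun z => tau * (us z + ws z)).

Lemma decomposition_le x us ws u e1 e2 : 0 <= e1 -> 0 <= e2 ->
  coderivB F x yb us -> ncone A x ws -> dball1 ws ->
  DFinvS F yb x (scaleS e1 (@cball1 _ Y)) u ->
  Defs.msum (tcone A x) (scaleS e2 (@cball1 _ X)) u ->
  us u + ws u <= e1 + e2.
Proof.
move=> e1_ge0 e2_ge0 [ys ys_B us_cd] ws_N ws_B [v v_B Tuv] [a Ta [d d_B u_eq]].
have := coderiv_DFinv_le us_cd Tuv; have := dball1_scaleS_le e1_ge0 ys_B v_B.
have := ncone_tcone_le0 ws_N Ta; have := dball1_scaleS_le e2_ge0 ws_B d_B.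
by rewrite -u_eq (linD ws_B.1.1); lra.
Qed.

Lemma tangent_regular_of_decomposition x tau : S x -> 0 < tau ->
  normal_decomposition x tau -> tangent_regular x tau^-1.
Proof.
move=> Sx tau_gt0 tau_dec e1 e2 e1_ge0 e2_ge0 e12_lt u [DFu TAu].
apply: contrapT => /(ncone_separation S_convex Sx)[L [L_N L_B Lu_ge1]].
have [us [ws [us_cd [ws_N [ws_B L_eq]]]]] := tau_dec L L_N L_B.
have := decomposition_le e1_ge0 e2_ge0 us_cd ws_N ws_B DFu TAu.
have : tau * (e1 + e2) < 1 by rewrite -(mulfV (lt0r_neq0 tau_gt0)) ltr_pM2l.
by move: Lu_ge1; rewrite L_eq; nra.
Qed.

Lemma normal_bound_of_regular x eta tau xs u v a :
  S x -> 0 < tau -> 1 < tau * eta -> tangent_regular x eta ->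
  ncone S x xs -> dball1 xs ->
  cone_gen (gph F) (x, yb) (u, v) -> cone_gen A x a ->
  xs u <= tau * (`|u - a| + `|v|).
Proof.
move=> [Fx Ax] tau_gt0 tau_eta incl xs_N xs_B Kuv Ka.
have [_ _ KG_Z] := convex_cone_gen (a := (x, yb)) gph_convex Fx.
have [_ _ KA_Z] := convex_cone_gen A_convex Ax.
set s := `|u - a| + `|v|.
have s_ge0 : 0 <= s by rewrite addr_ge0.
apply/ler_addgt0Pr => eps eps_gt0.
have tse_gt0 : 0 < tau * s + eps by rewrite ltr_pwDr // mulr_ge0 // ltW.
pose l := (tau * s + eps)^-1.
have l_gt0 : 0 < l by rewrite invr_gt0.
have ls_lt : l * `|v| + l * `|u - a| < eta.
  have : l * s * tau < 1.
    by rewrite /l -mulrA mulrC ltr_pdivrMr // mul1r mulrC ltrDl.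
  by rewrite -mulrDr addrC -/s; nra.
have [c Tc [b b_B lu_eq]] : Defs.msum (tcone S x) (@cball1 _ X) (l *: u).
  have lnorm_ge0 (Z : normedModType R) (z : Z) : 0 <= l * `|z|.
    by rewrite mulr_ge0 // ltW.
  apply: (incl _ _ (lnorm_ge0 _ v) (lnorm_ge0 _ (u - a)) ls_lt); split.
    exists (l *: v); first exact: scaleS_norm.
    exact: (cone_gen_tcone (a := (x, yb)) gph_convex Fx (KG_Z _ _ l_gt0 Kuv)).
  exists (l *: a); first exact: (cone_gen_tcone A_convex Ax (KA_Z _ _ l_gt0 Ka)).
  by exists (l *: (u - a)); [exact: scaleS_norm | rewrite -scalerDr addrC subrK].
have : l * xs u <= 1.
  rewrite -(linZr _ _ xs_B.1.1) -lu_eq (linD xs_B.1.1).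
  have := ncone_tcone_le0 xs_N Tc; have := dball1_le b xs_B.
  by rewrite /cball1 /= in b_B; lra.
by rewrite mulrC ler_pdivrMr // mul1r.
Qed.

Lemma normal_decomposition_of_regular x eta tau :
  S x -> 0 < tau -> 1 < tau * eta -> tangent_regular x eta ->
  normal_decomposition x tau.
Proof.
move=> Sx tau_gt0 tau_eta incl xs xs_N xs_B.
have [Fx Ax] := Sx.
have xs_lin := xs_B.1.1.
have KG := convex_cone_gen (a := (x, yb)) gph_convex Fx.
have KA := convex_cone_gen A_convex Ax.
have C_cone := convex_coneX KG KA.
have [[KG0 _ _] [KA0 _ _]] := (KG, KA).
have g_lin : linear (fun w : X * Y * X => (w.1.1 - w.2, w.1.2)).
  move=> k [[u1 v1] a1] [[u2 v2] a2].
  by apply/pair_equal_spec; rewrite /= scalerBr opprD addrACA.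
have psi_lin : linear (fun w : X * Y * X => tau^-1 * xs w.1.1).
  move=> k [[u1 v1] a1] [[u2 v2] a2] /=.
  by rewrite (linD xs_lin) (linZr _ _ xs_lin) /GRing.scale /=; ring.
have psi_le w : cone_gen (gph F) (x, yb) w.1 /\ cone_gen A x w.2 ->
    tau^-1 * xs w.1.1 <= `|w.1.1 - w.2| + `|w.1.2|.
  case: w => [[u v] a] [Kuv Ka] /=; rewrite mulrC ler_pdivrMr // mulrC.
  exact: normal_bound_of_regular Sx tau_gt0 tau_eta incl xs_N xs_B Kuv Ka.
have [L [L_lin L_le L_ge]] := hahn_banach_cone
  (sublinear_pair (sublinear_norm X) (sublinear_norm Y)) C_cone g_lin psi_lin psi_le.
have [ws_B ys_B L_split] := dball1_pair_split L_lin L_le.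
exists (fun z => tau^-1 * xs z - L (z, 0)), (fun z => L (z, 0)).
split; [|split; [|split => //]].
- exists (fun v => L (0, v)) => //.
  split; first exact: is_dual_lincomb xs_B.1 ws_B.1.
  split=> [|u' v' Fuv]; first exact: ys_B.1.
  have Kuv := @cone_gen_sub _ _ (gph F) (x, yb) (u', v') Fuv.
  have := L_ge ((u' - x, v' - yb), 0) (conj Kuv KA0).
  by rewrite /= subr0 L_split; lra.
- split=> [|a' Aa']; first exact: ws_B.1.
  have := L_ge ((0, 0), a' - x) (conj KG0 (cone_gen_sub x Aa')).
  by rewrite /= (lin0 xs_lin) mulr0 sub0r L_split (linN ws_B.1.1) (lin0 ys_B.1.1); lra.
- by apply: funext => z; rewrite subrK mulrA divff ?mul1r // gt_eqF.
Qed.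

End Regularity.

Lemma inve_sup_eq_inf (R : realType) (E T : set R) :
  (forall t, T t -> 0 < t /\ E t^-1) ->
  (forall e t : R, E e -> 0 < t -> 1 < t * e -> T t) ->
  inve (ereal_sup ((fun e => e%:E) @` E `|` [set 0%E])) =
  ereal_inf ((fun t => t%:E) @` T).
Proof.
move=> TE ET; set s := ereal_sup _.
have s_ge0 : (0 <= s)%E by apply: ereal_sup_ubound; right.
have invE (t : R) : 0 < t -> inve (t^-1)%:E = t%:E.
  by move=> t0; rewrite /inve invr_eq0 gt_eqF // invrK.
have inv_ge0 (t : R) : 0 < t -> (0 <= (t^-1)%:E)%E.
  by move=> t0; rewrite lee_fin invr_ge0 ltW.
apply/eqP; rewrite eq_le; apply/andP; split.
  apply: le_ereal_inf_tmp => _ [t /TE[t0 Et] <-].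
  rewrite -invE // lee_pV2 ?inE ?inv_ge0 //.
  by apply: ereal_sup_ubound; left; exists t^-1.
have inT (t : R) : 0 < t -> (inve s < t%:E)%E -> T t.
  move=> t0; rewrite -invE // lte_pV2 ?inE ?inv_ge0 //.
  case/ereal_sup_gt => _ [[e Ee <-]|->]; last by rewrite lte_fin ltNge invr_ge0 ltW.
  by rewrite lte_fin -(ltr_pM2l t0) divff ?gt_eqF //; exact: ET.
have invs_ge0 : (0 <= inve s)%E by rewrite inve_ge0.
case Es : (inve s) invs_ge0 => [r| |] // r_ge0; last by rewrite leey.
apply/lee_addgt0Pr => eps eps0; apply: ereal_inf_lbound; exists (r + eps) => //.
by apply: inT; rewrite ?Es ?lte_fin ?ltrDl //; rewrite lee_fin in r_ge0; lra.
Qed.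

Unset Implicit Arguments.

Theorem proposition4p1 (R : realType) (X Y : completeNormedModType R)
  (F : X -> set Y) (A : set X) (yb : Y) (xb : X) :
  closed_convex_map F ->
  closed A -> convexS A ->
  F xb yb -> A xb ->
  inve (etaA F A xb yb) =
  ereal_inf ((fun t : R => t%:E) @` tau_set F A xb yb).
Proof.
move=> [_ F_convex] _ A_convex _ _.
have gph_convex : convexS (gph F : set (X * Y)).
  by move=> [x1 y1] [x2 y2] t; exact: F_convex.
apply: inve_sup_eq_inf => [t [t_gt0 [d d_gt0 dec]]|e t [_ [d d_gt0 incl]] t_gt0 te_gt1].
- split=> //; split; first by rewrite invr_gt0.
  exists d => // x Sx Bx.
  exact (tangent_regular_of_decomposition gph_convex A_convex Sx t_gt0 (dec x Sx Bx)).
- split=> //; exists d => // x Sx Bx.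
  exact (normal_decomposition_of_regular gph_convex A_convex Sx t_gt0 te_gt1 (incl x Sx Bx)).
Qed.
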